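(* Let $\diamond$ be the operation on $\mathbb{Z}$ given by $x\diamond y=x-\operatorname{sgn}(y-x)$. Then $(\mathbb{Z},\diamond)$ satisfies $\mathrm{x}\simeq(\mathrm{x}\diamond\mathrm{y})\diamond((\mathrm{x}\diamond\mathrm{y})\diamond\mathrm{y})$ but does not satisfy $\mathrm{x}\simeq(\mathrm{x}\diamond(\mathrm{x}\diamond\mathrm{y}))\diamond\mathrm{y}$. Consequently the first law does not imply the second.
   Context: $\operatorname{sgn}(h)$ is $1$ for $h>0$, $-1$ for $h<0$, and $0$ for $h=0$. A magma satisfies a law if the identity holds for all assignments of variables. *)

From Stdlib Require Import ZArith.
Open Scope Z_scope.

Definition diamond (x y : Z) : Z := x - Z.sgn (y - x).

Definition law1 {M : Type} (op : M -> M -> M) : Prop :=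
  forall x y : M, x = op (op x y) (op (op x y) y).

Definition law2 {M : Type} (op : M -> M -> M) : Prop :=
  forall x y : M, x = op (op x (op x y)) y.

(* [x ◇ y] is one step from [x] away from [y] (or [x] itself if [x = y]).
   So for [x < y], [u := x ◇ y = x - 1] and [u ◇ y = x - 2] lies below [u],
   whence [u ◇ (u ◇ y) = u + 1 = x]; the case [x > y] is symmetric. *)

From Stdlib Require Import ZArith Lia.

Lemma diamond_lt x y : x < y -> diamond x y = x - 1.
Proof. intros Hxy; unfold diamond; rewrite Z.sgn_pos by lia; reflexivity. Qed.

Lemma diamond_gt x y : y < x -> diamond x y = x + 1.
Proof. intros Hyx; unfold diamond; rewrite Z.sgn_neg by lia; lia. Qed.

Lemma diamond_diag x : diamond x x = x.
Proof. unfold diamond; rewrite Z.sub_diag; lia. Qed.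

Lemma diamond_law1 : law1 diamond.
Proof.
  intros x y; destruct (Z.lt_trichotomy x y) as [Hxy | [<- | Hyx]].
  - rewrite (diamond_lt x y), (diamond_lt (x - 1) y), diamond_gt by lia; lia.
  - now rewrite !diamond_diag.
  - rewrite (diamond_gt x y), (diamond_gt (x + 1) y), diamond_lt by lia; lia.
Qed.

Lemma diamond_not_law2 : ~ law2 diamond.
Proof. intros H; discriminate (H 0 1). Qed.

Lemma law1_not_implies_law2 {M : Type} (op : M -> M -> M) :
  law1 op -> ~ law2 op ->
  ~ (forall (N : Type) (op' : N -> N -> N), law1 op' -> law2 op').
Proof. intros H1 H2 Himp; exact (H2 (Himp M op H1)). Qed.

Theorem mainTheorem14 :
  law1 diamond /\ ~ law2 diamond /\
  ~ (forall (M : Type) (op : M -> M -> M), law1 op -> law2 op).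
Proof.
  split; [exact diamond_law1 | split; [exact diamond_not_law2 |]].
  exact (law1_not_implies_law2 diamond diamond_law1 diamond_not_law2).
Qed.
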